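(* Let $(\eta_k)_{k\in\mathbb{N}}$ be independent identically distributed random variables with values in $\mathbb{N}$, $P(\eta_k=m)=p_m$ ($p_m\ge0$, $\sum_m p_m=1$), and let $$\eta=\sum_{k=1}^\infty\frac{(-1)^{k-1}}{\eta_1(\eta_1+\eta_2)\cdots(\eta_1+\eta_2+\dots+\eta_k)}.$$ Then the distribution $\mu_\eta$ of $\eta$ is invariant and ergodic with respect to the shift $T$.
   Context: Every irrational $x\in(0,1)$ has a unique representation ($\bar O^1$-expansion) $$x=\sum_{k=1}^\infty\frac{(-1)^{k-1}}{g_1(g_1+g_2)\cdots(g_1+g_2+\dots+g_k)}=:\bar O^1(g_1,g_2,\dots),\qquad g_k\in\mathbb{N},$$ and every infinite sequence of positive integers yields an irrational number in $(0,1)$ this way; so $\eta=\bar O^1(\eta_1,\eta_2,\dots)$. The shift $T$ is defined on irrationals of $(0,1)$ by $T(\bar O^1(g_1,g_2,g_3,\dots))=\bar O^1(g_2,g_3,\dots)$. A measure $\mu$ is $T$-invariant if $\mu(T^{-1}E)=\mu(E)$ for every Borel set $E$; it is $T$-ergodic if every Borel set $A$ with $T^{-1}A=A$ has $\mu(A)\in\{0,1\}$. *)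

From HB Require Import structures.
From mathcomp Require Import all_boot all_order all_algebra.
From mathcomp Require Import all_classical all_reals all_analysis.
Set Implicit Arguments. Unset Strict Implicit. Unset Printing Implicit Defensive.
Import Order.TTheory GRing.Theory Num.Theory.
Import numFieldNormedType.Exports.
Local Open Scope classical_set_scope.
Local Open Scope ring_scope.

(* Sequences g_1, g_2, ... are encoded as g : nat -> nat with g 0 = g_1. *)

Definition O1_term (R : realType) (g : nat -> nat) (k : nat) : R :=
  (-1) ^+ k / \prod_(j < k.+1) ((\sum_(i < j.+1) g i)%N)%:R.

Definition O1 (R : realType) (g : nat -> nat) : R :=
  limn (series (O1_term R g)).

(* the domain of T: numbers having an O-bar^1 expansion with positive digits
   (= the irrationals of (0,1)) *)
Definition O1_dom (R : realType) (x : R) : Prop :=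
  exists g : nat -> nat, (forall k, (0 < g k)%N) /\ O1 R g = x.

(* The shift T(O1(g_1,g_2,...)) = O1(g_2,g_3,...); outside its domain we
   extend it by the identity. *)
Definition O1_shift (R : realType) (x : R) : R :=
  match pselect (O1_dom x) with
  | left h => O1 R (fun k => (projT1 (cid h)) k.+1)
  | right _ => x
  end.

Definition distr_of d (Omega : measurableType d) (R : realType)
  (P : probability Omega R) (f : Omega -> R) : set R -> \bar R :=
  fun A => P (f @^-1` A).

Definition mutually_independent d (Omega : measurableType d) (R : realType)
  (P : probability Omega R) (X : nat -> Omega -> nat) : Prop :=
  forall (s : seq nat) (A : nat -> set nat), uniq s ->
    P (\bigcap_(i in [set` s]) (X i @^-1` A i)) =
    (\prod_(i <- s) P (X i @^-1` A i))%E.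

Definition T_invariant (R : realType) (T : R -> R) (mu : set R -> \bar R) :=
  forall E : set R, measurable E -> mu (T @^-1` E) = mu E.

Definition T_ergodic (R : realType) (T : R -> R) (mu : set R -> \bar R) :=
  forall A : set R, measurable A -> T @^-1` A = A ->
    mu A = 0%E \/ mu A = 1%E.

From HB Require Import structures.
From mathcomp Require Import all_boot all_order all_algebra.
From mathcomp Require Import all_classical all_reals all_analysis.
From mathcomp Require Import ring lra zify.
From mathcomp Require Import measurable_realfun.
Set Implicit Arguments. Unset Strict Implicit. Unset Printing Implicit Defensive.
Import Order.TTheory GRing.Theory Num.Theory.
Import numFieldNormedType.Exports.
Local Open Scope classical_set_scope.
Local Open Scope ring_scope.

(* The digits of an O-bar^1 expansion are determined by its value: the first
   digit g_1 is the unique n with 1/(n+1) < x <= 1/n, and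
   x = (1 - O1(g_1+g_2, g_3, ...)) / g_1 lets one peel off digits.  Hence the
   shift T corresponds to the shift of digit sequences, and eta = F(X) for a
   measurable F on the sequence space.  Invariance: the shifted i.i.d.
   sequence has the same law as the sequence (they agree on cylinders).
   Ergodicity: a T-invariant set A gives a shift-invariant set of sequences,
   so the event {eta in A} is also an event of (X_n, X_(n+1), ...) for every n,
   hence independent of every cylinder event in the first n coordinates, hence
   of itself; thus its probability p satisfies p = p^2. *)

Lemma alternating_sum_bounds (R : realFieldType) N (b : nat -> R) :
  (forall j, 0 <= b j) -> (forall j, b j.+1 <= b j) ->
  0 <= \sum_(j < N) (-1) ^+ j * b j <= b 0%N.
Proof.
elim: N b => [|N IH] b b0 bd; first by rewrite big_ord0 lexx b0.
rewrite big_ord_recl expr0 mul1r.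
under eq_bigr => j _ do rewrite /bump /= exprS mulN1r mulNr.
rewrite sumrN.
have /andP[h1 h2] := IH (fun j => b j.+1) (fun j => b0 j.+1) (fun j => bd j.+1).
have := bd 0%N; move: h1 h2 => /=.
set A := \sum_(_ < _) _; move=> h1 h2 h3; apply/andP; split; lra.
Qed.

Section O1_expansion.
Variable R : realType.
Implicit Types (g h : nat -> nat).

Definition positive_digits g := forall k, (0 < g k)%N.

Definition O1_psum g j := (\sum_(i < j.+1) g i)%N.

Definition O1_den g k : R := \prod_(j < k.+1) (O1_psum g j)%:R.

Local Notation O1_partial g := (series (O1_term R g)).

Lemma O1_psum0 g : O1_psum g 0 = g 0.
Proof. by rewrite /O1_psum big_ord_recr big_ord0. Qed.

Lemma O1_psumS g j : O1_psum g j.+1 = (O1_psum g j + g j.+1)%N.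
Proof. by rewrite /O1_psum big_ord_recr. Qed.

Lemma O1_psum_gt g j : positive_digits g -> (j < O1_psum g j)%N.
Proof.
move=> pg; elim: j => [|j IH]; first by rewrite O1_psum0 pg.
by rewrite O1_psumS; have := pg j.+1; lia.
Qed.

Lemma O1_den0 g : O1_den g 0 = (g 0)%:R.
Proof. by rewrite /O1_den big_ord1 O1_psum0. Qed.

Lemma O1_denS g k : O1_den g k.+1 = O1_den g k * (O1_psum g k.+1)%:R.
Proof. by rewrite /O1_den big_ord_recr. Qed.

Lemma O1_den_gt0 g k : positive_digits g -> 0 < O1_den g k.
Proof.
move=> pg; elim: k => [|k IH]; first by rewrite O1_den0 ltr0n pg.
rewrite O1_denS mulr_gt0 // ltr0n; have := O1_psum_gt k.+1 pg; lia.
Qed.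

Lemma O1_den_ge_exp2 g k : positive_digits g -> 2 ^+ k <= O1_den g k.
Proof.
move=> pg; elim: k => [|k IH]; first by rewrite O1_den0 expr0 ler1n pg.
rewrite O1_denS exprSr; apply: ler_pM => //.
rewrite ler_nat; have := O1_psum_gt k.+1 pg; lia.
Qed.

Lemma O1_denV_ltS g k : positive_digits g -> (O1_den g k.+1)^-1 < (O1_den g k)^-1.
Proof.
move=> pg; rewrite ltf_pV2 ?posrE ?O1_den_gt0 // O1_denS.
rewrite -[X in X < _]mulr1 ltr_pM2l ?O1_den_gt0 // ltr1n.
have := O1_psum_gt k.+1 pg; lia.
Qed.

Lemma O1_termE g k : O1_term R g k = (-1) ^+ k * (O1_den g k)^-1.
Proof. by []. Qed.

Lemma O1_partial0 g : O1_partial g 0 = 0.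
Proof. by rewrite /series /= big_geq. Qed.

Lemma O1_partialS g n : O1_partial g n.+1 = O1_partial g n + O1_term R g n.
Proof. by rewrite /series /= big_nat_recr. Qed.

Lemma O1_partial_cvg g : positive_digits g -> cvgn (O1_partial g).
Proof.
move=> pg; apply: normed_cvg.
apply: (@series_le_cvg _ _ (geometric 1 (2^-1))).
- by move=> n /=; rewrite normr_ge0.
- by move=> n; rewrite /geometric /= mul1r exprn_ge0 // invr_ge0.
- move=> n; rewrite /geometric /= mul1r O1_termE normrM normrX normrN normr1.
  rewrite expr1n mul1r normfV ger0_norm; last exact/ltW/O1_den_gt0.
  rewrite exprVn lef_pV2 ?posrE ?O1_den_gt0 ?exprn_gt0 //; exact: O1_den_ge_exp2.
- by apply: is_cvg_geometric_series; rewrite ger0_norm ?invr_ge0 // invf_lt1 // ltr1n.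
Qed.

Lemma O1_partial_split g m n : (m <= n)%N ->
  O1_partial g n = O1_partial g m + \sum_(j < n - m) O1_term R g (m + j).
Proof.
move=> mn; rewrite /series /= (big_cat_nat (leq0n m) mn) /=; congr (_ + _).
by rewrite -{1}(add0n m) big_addn big_mkord; apply: eq_bigr => j _; rewrite addnC.
Qed.

Lemma O1_partial_even_bracket g m n : positive_digits g -> ~~ odd m -> (m <= n)%N ->
  O1_partial g m <= O1_partial g n <= O1_partial g m + (O1_den g m)^-1.
Proof.
move=> pg em mn; rewrite (O1_partial_split g mn).
have -> : \sum_(j < n - m) O1_term R g (m + j) =
          \sum_(j < n - m) (-1) ^+ j * (O1_den g (m + j))^-1.
  by apply: eq_bigr => j _; rewrite O1_termE exprD -signr_odd (negbTE em) mul1r.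
have := @alternating_sum_bounds _ (n - m) (fun j => (O1_den g (m + j))^-1).
rewrite addn0 => /(_ _ _)/andP[].
- by move=> j; rewrite invr_ge0 ltW // O1_den_gt0.
- by move=> j; rewrite addnS ltW // O1_denV_ltS.
move=> h1 h2; apply/andP; split; lra.
Qed.

Lemma O1_ge_partial g m : positive_digits g -> ~~ odd m ->
  O1_partial g m <= O1 R g.
Proof.
move=> pg em; apply: limr_ge; first exact: O1_partial_cvg.
near=> n; have : (m <= n)%N by near: n; exists m.
by move=> /(O1_partial_even_bracket pg em)/andP[].
Unshelve. all: by end_near. Qed.

Lemma O1_le_partial g m : positive_digits g -> ~~ odd m ->
  O1 R g <= O1_partial g m + (O1_den g m)^-1.
Proof.
move=> pg em; apply: limr_le; first exact: O1_partial_cvg.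
near=> n; have : (m <= n)%N by near: n; exists m.
by move=> /(O1_partial_even_bracket pg em)/andP[].
Unshelve. all: by end_near. Qed.

Lemma O1_le_inv_digit0 g : positive_digits g -> O1 R g <= ((g 0)%:R)^-1.
Proof.
by move=> pg; have := @O1_le_partial g 0 pg isT; rewrite O1_partial0 add0r O1_den0.
Qed.

Lemma O1_gt_inv_digit0S g : positive_digits g -> ((g 0)%:R + 1)^-1 < O1 R g.
Proof.
move=> pg; apply: (lt_le_trans _ (@O1_ge_partial g 4 pg isT)).
rewrite !O1_partialS O1_partial0 add0r !O1_termE /= expr0 expr1 !mul1r !mulN1r.
have h23 := @O1_denV_ltS g 2 pg.
have h01 : ((g 0)%:R + 1)^-1 <= (O1_den g 0)^-1 - (O1_den g 1)^-1.
  rewrite O1_denS O1_den0 O1_psumS O1_psum0 natrD.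
  have a1 : 1 <= (g 0)%:R :> R by rewrite ler1n pg.
  have b1 : 1 <= (g 1)%:R :> R by rewrite ler1n pg.
  set a := (g 0)%:R in a1 *; set b := (g 1)%:R in b1 *.
  have -> : (a + 1)^-1 = a^-1 - (a * (a + 1))^-1.
    by field; apply/andP; split; apply/negP => /eqP; lra.
  rewrite lerD2l lerN2 lef_pV2 ?posrE ?mulr_gt0 //; try lra.
  by rewrite ler_pM2l; lra.
rewrite !exprS expr0 mulr1 mulN1r opprK mulN1r mul1r.
lra.
Qed.

(* Fusing the first two digits, rather than dropping the first, keeps the
   partial sums of the tail equal to those of g, so the denominators factor. *)
Definition fuse_digits g : nat -> nat :=
  fun k => if k is k'.+1 then g k'.+2 else (g 0 + g 1)%N.

Lemma fuse_digits_pos g : positive_digits g -> positive_digits (fuse_digits g).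
Proof. by move=> pg [|k] /=; rewrite ?addn_gt0 ?pg. Qed.

Lemma O1_psum_fuse g j : O1_psum (fuse_digits g) j = O1_psum g j.+1.
Proof.
elim: j => [|j IH]; first by rewrite !O1_psum0 O1_psumS O1_psum0.
by rewrite O1_psumS IH (O1_psumS g j.+1).
Qed.

Lemma O1_denS_fuse g k : O1_den g k.+1 = (g 0)%:R * O1_den (fuse_digits g) k.
Proof.
rewrite /O1_den big_ord_recl O1_psum0; congr (_ * _); apply: eq_bigr => j _.
by rewrite O1_psum_fuse.
Qed.

Lemma O1_partialS_fuse g n :
  O1_partial g n.+1 = ((g 0)%:R)^-1 - ((g 0)%:R)^-1 * O1_partial (fuse_digits g) n.
Proof.
elim: n => [|n IH].
  by rewrite O1_partialS !O1_partial0 O1_termE expr0 mul1r O1_den0; ring.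
rewrite O1_partialS IH (O1_partialS (fuse_digits g)) !O1_termE O1_denS_fuse.
rewrite invfM exprS; ring.
Qed.

Lemma O1_fuse g : positive_digits g ->
  O1 R g = ((g 0)%:R)^-1 - ((g 0)%:R)^-1 * O1 R (fuse_digits g).
Proof.
move=> pg; apply: cvg_lim => //.
rewrite -cvg_shiftS /=.
under eq_fun do rewrite O1_partialS_fuse.
apply: cvgB; first exact: cvg_cst.
by apply: cvgMl_tmp; apply: O1_partial_cvg; apply: fuse_digits_pos.
Qed.

Lemma O1_digit0_inj g h : positive_digits g -> positive_digits h ->
  O1 R g = O1 R h -> g 0 = h 0.
Proof.
have key g' h' : positive_digits g' -> positive_digits h' -> (g' 0 < h' 0)%N ->
    O1 R h' < O1 R g'.
  move=> pg ph lt; apply: (le_lt_trans (O1_le_inv_digit0 ph)).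
  apply: le_lt_trans (O1_gt_inv_digit0S pg).
  rewrite lef_pV2 ?posrE ?addr_gt0 ?ltr0n ?pg ?ph // natr1 ler_nat //.
move=> pg ph e; have [gh|hg|//] := ltngtP (g 0) (h 0).
- by have := key _ _ pg ph gh; rewrite e ltxx.
- by have := key _ _ ph pg hg; rewrite e ltxx.
Qed.

Lemma O1_inj g h : positive_digits g -> positive_digits h -> O1 R g = O1 R h -> g = h.
Proof.
move=> pg ph e; apply/funext => n; elim: n g h pg ph e => [|n IH] g h pg ph e.
  exact: O1_digit0_inj.
have e0 := O1_digit0_inj pg ph e.
have ef : O1 R (fuse_digits g) = O1 R (fuse_digits h).
  move: e; rewrite (O1_fuse pg) (O1_fuse ph) e0.
  have nz : ((h 0)%:R)^-1 != 0 :> R by rewrite invr_eq0 pnatr_eq0 -lt0n ph.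
  by move=> /(congr1 (fun x => ((h 0)%:R)^-1 - x)); rewrite !subKr => /(mulfI nz).
have := IH _ _ (fuse_digits_pos pg) (fuse_digits_pos ph) ef.
by case: n IH => [|n] IH //=; rewrite e0 => /addnI.
Qed.

Lemma O1_shiftE g : positive_digits g -> O1_shift (O1 R g) = O1 R (fun k => g k.+1).
Proof.
move=> pg; rewrite /O1_shift; case: pselect => [dom|ndom]; last first.
  by exfalso; apply: ndom; exists g.
by case: cid => g' [pg' e] /=; rewrite (O1_inj pg' pg e).
Qed.

End O1_expansion.

Definition cylinder (n : nat) (A : nat -> set nat) : set (nat -> nat) :=
  [set g | forall i, (i < n)%N -> A i (g i)].

Definition cylinders : set (set (nat -> nat)) :=
  [set C | exists n A, C = cylinder n A].

Definition seqspace := g_sigma_algebraType cylinders.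

Lemma measurable_cylinder n A : measurable (cylinder n A : set seqspace).
Proof. by apply: sub_sigma_algebra; exists n, A. Qed.

Lemma cylinders_setI_closed : setI_closed cylinders.
Proof.
move=> _ _ [n [A ->]] [m [B ->]].
exists (maxn n m), (fun i => (if (i < n)%N then A i else setT) `&`
                            (if (i < m)%N then B i else setT)).
apply/seteqP; split => g /=.
- move=> [hA hB] i _; split; case: ifP => // h; [exact: hA|exact: hB].
- move=> h; split => i hi.
  + by have := h i; rewrite hi; case=> //; lia.
  + by have := h i; rewrite hi; case=> //; lia.
Qed.

Lemma seqspace_induction (Q : set (set seqspace)) :
  Q setT -> (forall n A, Q (cylinder n A)) ->
  (forall B, measurable B -> Q B -> Q (~` B)) ->
  (forall F : (set seqspace)^nat, (forall n, measurable (F n)) ->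
     trivIset setT F -> (forall n, Q (F n)) -> Q (\bigcup_k F k)) ->
  forall B, measurable B -> Q B.
Proof.
move=> QT Qc QC QU B mB.
apply: (@dynkin_induction _ seqspace cylinders Q) => //.
- exact: cylinders_setI_closed.
- by move=> _ [n [A ->]].
Qed.

Lemma trivIset_preimage (T U : Type) (f : T -> U) (F : nat -> set U) :
  trivIset setT F -> trivIset setT (fun n => f @^-1` F n).
Proof. by move=> h i j Hi Hj [w [a b]]; apply: h => //; exists (f w). Qed.

(* Countability of seq nat is what makes every preimage a countable union of
   cylinders, whatever the codomain. *)
Lemma finitely_dependent_measurable d (T : measurableType d) (f : seqspace -> T) n :
  (forall g g', (forall i, (i < n)%N -> g i = g' i) -> f g = f g') ->
  measurable_fun setT f.
Proof.
move=> fd _ E _; rewrite setTI.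
pose ext (s : seq nat) : nat -> nat := nth 0%N s.
pose C (j : nat) : set seqspace := match unpickle j with
  | Some s => if `[< E (f (ext s)) >] then cylinder n (fun i => [set nth 0%N s i])
              else set0
  | None => set0 end.
have -> : f @^-1` E = \bigcup_j C j.
  apply/seteqP; split => g /=.
  - move=> Eg; exists (pickle (mkseq g n)) => //.
    have fe : f (ext (mkseq g n)) = f g.
      by apply: fd => i hi; rewrite /ext nth_mkseq.
    rewrite /C pickleK fe; case: asboolP => // _ i hi /=; by rewrite nth_mkseq.
  - move=> [j _]; rewrite /C; case: unpickle => // s.
    case: asboolP => // Es hg.
    by have -> : f g = f (ext s) by apply: fd => i hi; exact: hg.
apply: bigcupT_measurable => j; rewrite /C; case: unpickle => // s.
case: asboolP => // _; exact: measurable_cylinder.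
Qed.

Section O1_on_seqspace.
Variable R : realType.

(* Clamping the digits to be positive makes the expansion a total function on
   the sequence space; it does not change it on positive sequences. *)
Definition clamp_digits (g : nat -> nat) : nat -> nat := fun k => maxn 1 (g k).

Definition O1_seq (g : seqspace) : R := O1 R (clamp_digits g).

Lemma clamp_digits_pos g : positive_digits (clamp_digits g).
Proof. by move=> k; rewrite /clamp_digits leq_max. Qed.

Lemma clamp_digits_id g : positive_digits g -> clamp_digits g = g.
Proof. by move=> pg; apply/funext => k; apply/maxn_idPr/pg. Qed.

Lemma O1_term_eq g g' k : (forall i, (i <= k)%N -> g i = g' i) ->
  O1_term R g k = O1_term R g' k.
Proof.
move=> H; rewrite /O1_term; congr (_ / _); apply: eq_bigr => j _.
congr (_%:R); apply: eq_bigr => i _; apply: H.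
by have := ltn_ord i; have := ltn_ord j; lia.
Qed.

Lemma measurable_O1_seq : measurable_fun setT O1_seq.
Proof.
apply: (@measurable_fun_cvg _ _ _ setT
          (fun m (g : seqspace) => series (O1_term R (clamp_digits g)) m)).
- move=> m; apply: (@finitely_dependent_measurable _ _ _ m) => g g' H.
  rewrite /series /=; apply: eq_big_nat => k /andP[_ hk].
  by apply: O1_term_eq => i hi; rewrite /clamp_digits H //; lia.
- by move=> g _; exact: (@O1_partial_cvg R _ (clamp_digits_pos g)).
Qed.

Lemma O1_seq_shift g : O1_shift (O1_seq g) = O1_seq (fun k => g k.+1).
Proof. exact: (@O1_shiftE R _ (clamp_digits_pos g)). Qed.

End O1_on_seqspace.

Section Independence.
Local Open Scope ereal_scope.
Context (R : realType) (d : measure_display) (Omega : measurableType d)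
  (P : probability Omega R).

Lemma prob_fineK (A : set Omega) : measurable A -> P A = (fine (P A))%:E.
Proof. by move=> mA; rewrite fineK // fin_num_measure. Qed.

Lemma indep_setC (Y Z : set Omega) : measurable Y -> measurable Z ->
  P (Y `&` Z) = P Y * P Z -> P (~` Y `&` Z) = P (~` Y) * P Z.
Proof.
move=> mY mZ h.
rewrite setIC -setDE measureD //; last by rewrite ltey_eq fin_num_measure.
change (P Z - P (Z `&` Y) = P (~` Y) * P Z).
rewrite probability_setC // setIC.
move: h; rewrite (prob_fineK mY) (prob_fineK mZ) (prob_fineK (measurableI Y Z mY mZ)).
set a := fine (P Y); set b := fine (P Z); set c := fine (P (Y `&` Z)).
rewrite -EFinM => -[hc].
by rewrite -EFinB -EFinB -EFinM hc mulrBl mul1r.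
Qed.

Lemma indep_bigcup (F : nat -> set Omega) (Z : set Omega) :
  (forall n, measurable (F n)) -> measurable Z -> trivIset setT F ->
  (forall n, P (F n `&` Z) = P (F n) * P Z) ->
  P (\bigcup_n F n `&` Z) = P (\bigcup_n F n) * P Z.
Proof.
move=> mF mZ tF h.
have tFZ : trivIset setT (fun n => F n `&` Z).
  by move=> i j Hi Hj [w [[a _] [b _]]]; apply: tF => //; exists w.
rewrite setI_bigcupl (measure_bigcup P _ _ (fun i _ => measurableI _ _ (mF i) mZ) tFZ).
rewrite (measure_bigcup P _ _ (fun i _ => mF i) tF).
transitivity (\sum_(i <oo | i \in [set: nat]) ((fine (P Z))%:E * P (F i))).
  by apply: eq_eseriesr => i _; rewrite muleC -(prob_fineK mZ); exact: h.
rewrite nneseriesZl; last by move=> i _; exact: measure_ge0.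
by rewrite muleC -(prob_fineK mZ).
Qed.

Lemma indep_preimage (f : Omega -> seqspace) (Z : set Omega) :
  (forall B, measurable B -> measurable (f @^-1` B)) -> measurable Z ->
  (forall n A, P (f @^-1` cylinder n A `&` Z) = P (f @^-1` cylinder n A) * P Z) ->
  forall B, measurable B -> P (f @^-1` B `&` Z) = P (f @^-1` B) * P Z.
Proof.
move=> mf mZ hcyl; apply: seqspace_induction => //.
- by rewrite preimage_setT setTI probability_setT mul1e.
- by move=> B mB h; rewrite -preimage_setC; apply: indep_setC => //; exact: mf.
- move=> F mF tF h; rewrite preimage_bigcup; apply: indep_bigcup => //.
  + by move=> k; exact: mf.
  + exact: trivIset_preimage.
Qed.

Lemma self_indep_prob01 (A : set Omega) : measurable A ->
  P (A `&` A) = P A * P A -> P A = 0 \/ P A = 1.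
Proof.
move=> mA; rewrite setIid (prob_fineK mA) -EFinM => -[hb].
have : (fine (P A) * (1 - fine (P A)) = 0)%R by rewrite mulrBr mulr1 -hb subrr.
move/eqP; rewrite mulf_eq0 => /orP[/eqP -> | ]; first by left.
by rewrite subr_eq0 => /eqP <-; right.
Qed.

End Independence.

Section IID_digits.
Context (R : realType) (d : measure_display) (Omega : measurableType d)
  (P : probability Omega R) (X : nat -> Omega -> nat) (p : nat -> R).
Hypothesis mX : forall k m, measurable (X k @^-1` [set m]).
Hypothesis Xpos : forall k w, (0 < X k w)%N.
Hypothesis pX : forall k m, P (X k @^-1` [set m]) = (p m)%:E.
Hypothesis indep : mutually_independent P X.

Definition Xtail k (w : Omega) : seqspace := fun i => X (i + k)%N w.

Lemma preimage_X k A : X k @^-1` A = \bigcup_(m in A) X k @^-1` [set m].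
Proof.
apply/seteqP; split => w /=; first by move=> h; exists (X k w).
by move=> [m Am ->].
Qed.

Lemma measurable_preimage_X k A : measurable (X k @^-1` A).
Proof. by rewrite preimage_X; apply: bigcup_measurable => m _. Qed.

Lemma prob_preimage_X k A : P (X k @^-1` A) = P (X 0 @^-1` A).
Proof.
have t j : trivIset A (fun m => X j @^-1` [set m]).
  by move=> a b Ha Hb [w [ha hb]]; rewrite -ha -hb.
rewrite (preimage_X k) (preimage_X 0).
rewrite (measure_bigcup P _ _ (fun m _ => mX k m) (t k)).
rewrite (measure_bigcup P _ _ (fun m _ => mX 0 m) (t 0)).
by apply: eq_eseriesr => m _; exact: etrans (pX k m) (esym (pX 0 m)).
Qed.

Lemma Xtail_cylinder k n A : Xtail k @^-1` cylinder n A =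
  \bigcap_(i in [set` iota k n]) X i @^-1` (A (i - k)%N).
Proof.
apply/seteqP; split => w /=.
- move=> h i; rewrite /= mem_iota => /andP[h1 h2].
  by have := h (i - k)%N; rewrite /Xtail subnK //; apply; lia.
- move=> h i hi; have := h (i + k)%N; rewrite addnK; apply.
  by rewrite /= mem_iota; lia.
Qed.

Lemma measurable_Xtail_cylinder k n A : measurable (Xtail k @^-1` cylinder n A).
Proof.
have -> : Xtail k @^-1` cylinder n A =
    \bigcap_i (if (i < n)%N then X (i + k)%N @^-1` A i else setT).
  apply/seteqP; split => w /=.
  - by move=> h i _; case: ifP => // hi; exact: h.
  - by move=> h i hi; have := h i Logic.I; rewrite hi.
by apply: bigcapT_measurable => i; case: ifP => _ //; exact: measurable_preimage_X.
Qed.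

Lemma prob_Xtail_cylinder k n A : P (Xtail k @^-1` cylinder n A) =
  (\prod_(i <- iota 0 n) P (X 0 @^-1` A i))%E.
Proof.
rewrite Xtail_cylinder (@indep (iota k n) (fun i => A (i - k)%N) (iota_uniq _ _)).
rewrite -{1}(addn0 k) iotaDl big_map; apply: eq_bigr => i _.
by rewrite addKn prob_preimage_X.
Qed.

Lemma measurable_Xtail k B : measurable B -> measurable (Xtail k @^-1` B).
Proof.
apply: (@seqspace_induction (fun B => measurable (Xtail k @^-1` B))).
- by rewrite preimage_setT.
- exact: measurable_Xtail_cylinder.
- by move=> B0 _ h; rewrite -preimage_setC; exact: measurableC.
- by move=> F _ _ h; rewrite preimage_bigcup; exact: bigcupT_measurable.
Qed.

Lemma Xtail_law k B : measurable B -> P (Xtail k @^-1` B) = P (Xtail 0 @^-1` B).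
Proof.
apply: (@seqspace_induction (fun B => P (Xtail k @^-1` B) = P (Xtail 0 @^-1` B))).
- by rewrite !preimage_setT.
- by move=> n A; rewrite !prob_Xtail_cylinder.
- move=> B0 mB h; rewrite -!preimage_setC !probability_setC ?h //;
    exact: measurable_Xtail.
- move=> F mF tF h; rewrite !preimage_bigcup.
  rewrite (measure_bigcup P _ _ (fun n _ => measurable_Xtail k (mF n))
             (trivIset_preimage (f := Xtail k) tF)).
  rewrite (measure_bigcup P _ _ (fun n _ => measurable_Xtail 0 (mF n))
             (trivIset_preimage (f := Xtail 0) tF)).
  by apply: eq_eseriesr => n _; exact: h.
Qed.

Lemma Xtail_cylinder_indep n m A B :
  P (Xtail n @^-1` cylinder m B `&` Xtail 0 @^-1` cylinder n A) =
  (P (Xtail n @^-1` cylinder m B) * P (Xtail 0 @^-1` cylinder n A))%E.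
Proof.
pose D i := if (i < n)%N then A i else B (i - n)%N.
have -> : Xtail n @^-1` cylinder m B `&` Xtail 0 @^-1` cylinder n A =
    Xtail 0 @^-1` cylinder (n + m) D.
  apply/seteqP; split => w /=.
  - move=> [hB hA] i hi; rewrite /D; case: ifP => hin; first exact: hA.
    by have := hB (i - n)%N; rewrite /Xtail addn0 subnK; [apply; lia | lia].
  - move=> h; split => i hi.
    + have := h (i + n)%N; rewrite /D /Xtail.
      have -> : (i + n < n)%N = false by lia.
      by rewrite addnK addn0; apply; lia.
    + by have := h i; rewrite /D hi; apply; lia.
rewrite !prob_Xtail_cylinder iotaD big_cat /= [RHS]muleC; congr (_ * _)%E.
- apply: eq_big_seq => i; rewrite mem_iota /D => /andP[_ hi].
  by rewrite add0n in hi; rewrite hi.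
- rewrite add0n -{1}(addn0 n) iotaDl big_map; apply: eq_bigr => i _.
  by rewrite /D ifF ?addKn //; lia.
Qed.

Lemma Xtail_indep n A B : measurable B ->
  P (Xtail n @^-1` B `&` Xtail 0 @^-1` cylinder n A) =
  (P (Xtail n @^-1` B) * P (Xtail 0 @^-1` cylinder n A))%E.
Proof.
apply: indep_preimage; first exact: measurable_Xtail.
- exact: measurable_Xtail_cylinder.
- by move=> m B'; exact: Xtail_cylinder_indep.
Qed.

Lemma shift_invariant_event01 (B : set seqspace) : measurable B ->
  (forall g : seqspace, B (fun k => g k.+1) = B g) ->
  P (Xtail 0 @^-1` B) = 0%E \/ P (Xtail 0 @^-1` B) = 1%E.
Proof.
move=> mB shB.
have XtailB n : Xtail n @^-1` B = Xtail 0 @^-1` B.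
  elim: n => // n <-.
  have e w : Xtail n.+1 w = (fun k => Xtail n w k.+1).
    by apply/funext => k; rewrite /Xtail addSnnS.
  by apply/seteqP; split => w /=; rewrite e shB.
have mB0 := measurable_Xtail 0 mB.
apply: self_indep_prob01 => //; apply: indep_preimage => //.
- exact: measurable_Xtail.
- move=> n A; rewrite setIC muleC -(XtailB n).
  exact: Xtail_indep.
Qed.

Let eta w := O1 R (fun k => X k w).

Lemma etaE w : eta w = O1_seq R (Xtail 0 w).
Proof.
rewrite /O1_seq clamp_digits_id; last by move=> k; exact: Xpos.
by congr (O1 R _); apply/funext => k; rewrite /Xtail addn0.
Qed.

Lemma eta_shift w : O1_shift (eta w) = O1_seq R (Xtail 1 w).
Proof.
rewrite etaE O1_seq_shift; congr (O1_seq R _); apply/funext => k.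
by rewrite /Xtail addn0 addn1.
Qed.

Lemma measurable_preimage_O1_seq (E : set R) : measurable E ->
  measurable (O1_seq R @^-1` E : set seqspace).
Proof. by move=> mE; have := measurable_O1_seq measurableT mE; rewrite setTI. Qed.

Lemma distr_eta_invariant : T_invariant (@O1_shift R) (distr_of P eta).
Proof.
move=> E mE; rewrite /distr_of.
have -> : eta @^-1` (@O1_shift R @^-1` E) = Xtail 1 @^-1` (O1_seq R @^-1` E).
  by apply/seteqP; split => w /=; rewrite eta_shift.
have -> : eta @^-1` E = Xtail 0 @^-1` (O1_seq R @^-1` E).
  by apply/seteqP; split => w /=; rewrite etaE.
by apply: Xtail_law; exact: measurable_preimage_O1_seq.
Qed.

Lemma distr_eta_ergodic : T_ergodic (@O1_shift R) (distr_of P eta).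
Proof.
move=> A mA TA.
have -> : distr_of P eta A = P (Xtail 0 @^-1` (O1_seq R @^-1` A)).
  by rewrite /distr_of; congr (P _); apply/seteqP; split => w /=; rewrite etaE.
apply: shift_invariant_event01; first exact: measurable_preimage_O1_seq.
by move=> g; rewrite /preimage /= -O1_seq_shift -[in RHS]TA.
Qed.

End IID_digits.

Theorem lemma2 (R : realType) (d : measure_display) (Omega : measurableType d)
  (P : probability Omega R) (X : nat -> Omega -> nat) (p : nat -> R) :
  (forall k m, measurable (X k @^-1` [set m])) ->
  (forall k w, (0 < X k w)%N) ->
  (forall m, 0 <= p m) ->
  ((\sum_(1 <= m <oo) (p m)%:E)%E = 1%E) ->
  (forall k m, P (X k @^-1` [set m]) = (p m)%:E) ->
  mutually_independent P X ->
  let eta := fun w => O1 R (fun k => X k w) in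
  T_invariant (@O1_shift R) (distr_of P eta) /\
  T_ergodic (@O1_shift R) (distr_of P eta).
Proof.
move=> mX Xpos _ _ pX indep eta; split.
- exact: (distr_eta_invariant mX Xpos pX indep).
- exact: (distr_eta_ergodic mX Xpos pX indep).
Qed.
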